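(* Consider the algorithm (Algorithm 3 of the paper) which, for any noise-free protocol of transcript length $L$ and any unknown number $T$ of adversarial bit flips, succeeds with high probability and, when successful, sends $L' = L + O\left(\sqrt{L(T+1)\log L} + T\right)$ bits. If the adversary flips $T = O(L)$ bits and the noise rate is $\epsilon = T/L'$, then this algorithm achieves a communication rate $L/L'$ of at least $1-O\left(\sqrt{\frac{\log L}{L}} + \sqrt{\epsilon \log L}\right)$.
   Context: Setting: Alice and Bob simulate a two-party protocol with transcript length $L$ (known to both) over a synchronous binary channel on which an adversary, who does not see the transmitted bits or the parties' private randomness, flips $T$ bits in total, with $T$ unknown to the parties. $L'$ denotes the total number of bits sent by the simulating algorithm; the communication rate is $L/L'$ and the (effective) noise rate is $\epsilon = T/L'$. *)

From Stdlib Require Import Reals.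
Open Scope R_scope.

Definition rate (L L' : nat) : R := INR L / INR L'.
Definition noise_rate (T L' : nat) : R := INR T / INR L'.

Definition alg3_length_bound (C : R) (L T L' : nat) : Prop :=
  INR L' <= INR L + C * (sqrt (INR L * (INR T + 1) * ln (INR L)) + INR T).

(** When [L' <= L] the rate is at least 1.  Otherwise the excess [L' - L] is at most
    [C (sqrt (L log L) + sqrt (L T log L) + T)], and dividing by [L' >= L] bounds the
    three terms by [sqrt (log L / L)], [sqrt (eps log L)] and [sqrt c * sqrt (eps log L)]
    respectively; the last one uses [T/L' = sqrt (T/L') * sqrt (T/L')] with [T <= c L <= c L']. *)

From Stdlib Require Import Reals Lra Lia Psatz.
Open Scope R_scope.

Lemma sqrt_add_le (u v : R) : 0 <= u -> 0 <= v -> sqrt (u + v) <= sqrt u + sqrt v.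
Proof.
  intros Hu Hv.
  pose proof (sqrt_pos u); pose proof (sqrt_pos v).
  rewrite <- (sqrt_square (sqrt u + sqrt v)) by lra.
  apply sqrt_le_1_alt.
  pose proof (sqrt_sqrt u Hu); pose proof (sqrt_sqrt v Hv).
  nra.
Qed.

Lemma sqrt_div_sq (x p : R) : 0 <= x -> 0 < p -> sqrt x / p = sqrt (x / (p * p)).
Proof.
  intros Hx Hp.
  rewrite sqrt_div_alt by nra.
  now rewrite sqrt_square by lra.
Qed.

Lemma div_ge_one_sub (l p D : R) : 0 < p -> p <= l + D -> l / p >= 1 - D / p.
Proof.
  intros Hp Hle.
  replace (1 - D / p) with ((p - D) / p) by (field; lra).
  apply Rle_ge, Rmult_le_compat_r; [apply Rlt_le, Rinv_0_lt_compat|]; lra.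
Qed.

Section ExcessTerms.

Variables (l p t g : R).
Hypotheses (Hl : 0 < l) (Hlp : l <= p) (Ht : 0 <= t) (Hg : 0 <= g).

Let Hp : 0 < p := Rlt_le_trans _ _ _ Hl Hlp.

Lemma sqrt_length_term_le : sqrt (l * g) / p <= sqrt (g / l).
Proof.
  rewrite sqrt_div_sq by nra.
  apply sqrt_le_1_alt.
  apply Rmult_le_reg_r with (p * p * l); [repeat apply Rmult_lt_0_compat; lra|].
  replace (l * g / (p * p) * (p * p * l)) with (l * l * g) by (field; lra).
  replace (g / l * (p * p * l)) with (p * p * g) by (field; lra).
  apply Rmult_le_compat_r; [lra|]; nra.
Qed.

Lemma sqrt_noise_term_le : sqrt (l * t * g) / p <= sqrt (t / p * g).
Proof.
  rewrite sqrt_div_sq by (repeat apply Rmult_le_pos; lra).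
  apply sqrt_le_1_alt.
  replace (l * t * g / (p * p)) with (l / p * (t / p * g)) by (field; lra).
  assert (l / p <= 1) by (apply Rmult_le_reg_r with p; [lra|]; field_simplify; lra).
  assert (0 <= t / p * g) by (apply Rmult_le_pos; [apply Rmult_le_pos|]; try apply Rlt_le, Rinv_0_lt_compat; lra).
  nra.
Qed.

Lemma flips_term_le (c : R) :
  0 < c -> t <= c * l -> 1 <= g -> t / p <= sqrt c * sqrt (t / p * g).
Proof.
  intros Hc Htc Hg1.
  assert (0 <= t / p) by (apply Rmult_le_pos; [|apply Rlt_le, Rinv_0_lt_compat]; lra).
  rewrite <- sqrt_mult_alt by lra.
  rewrite <- (sqrt_square (t / p)) at 1 by lra.
  apply sqrt_le_1_alt.
  replace (c * (t / p * g)) with (c * g * (t / p)) by ring.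
  assert (t / p <= c * g).
  { apply Rmult_le_reg_r with p; [lra|].
    replace (t / p * p) with t by (field; lra).
    assert (0 <= c * p * (g - 1)) by (apply Rmult_le_pos; nra).
    nra. }
  apply Rmult_le_compat_r; lra.
Qed.

End ExcessTerms.

Lemma length_excess_div_le (C c l t p g : R) :
  0 < C -> 0 < c -> 0 < l -> l <= p -> 0 <= t -> t <= c * l -> 1 <= g ->
  C * (sqrt (l * (t + 1) * g) + t) / p
  <= C * (1 + sqrt c) * (sqrt (g / l) + sqrt (t / p * g)).
Proof.
  intros HC Hc Hl Hlp Ht Htc Hg.
  assert (Hp : 0 < p) by lra.
  assert (Hsplit : sqrt (l * (t + 1) * g) <= sqrt (l * g) + sqrt (l * t * g)).
  { replace (l * (t + 1) * g) with (l * g + l * t * g) by ring.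
    apply sqrt_add_le; repeat apply Rmult_le_pos; lra. }
  pose proof (sqrt_length_term_le l p g Hl Hlp ltac:(lra)) as Ha.
  pose proof (sqrt_noise_term_le l p t g Hl Hlp Ht ltac:(lra)) as Hb.
  pose proof (flips_term_le l p t g Hl Hlp Ht c Hc Htc Hg) as Hf.
  pose proof (sqrt_pos c); pose proof (sqrt_pos (g / l)); pose proof (sqrt_pos (t / p * g)).
  assert (Hdiv : (sqrt (l * (t + 1) * g) + t) / p
                 <= sqrt (l * g) / p + sqrt (l * t * g) / p + t / p).
  { unfold Rdiv. rewrite <- !Rmult_plus_distr_r.
    apply Rmult_le_compat_r; [apply Rlt_le, Rinv_0_lt_compat|]; lra. }
  replace (C * (sqrt (l * (t + 1) * g) + t) / p)
    with (C * ((sqrt (l * (t + 1) * g) + t) / p)) by (field; lra).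
  rewrite (Rmult_assoc C); apply Rmult_le_compat_l; nra.
Qed.

Lemma one_le_ln_INR (L : nat) : (3 <= L)%nat -> 1 <= ln (INR L).
Proof.
  intros HL.
  assert (H3 : 3 <= INR L) by (replace 3 with (INR 3) by (simpl; lra); apply le_INR; lia).
  destruct (Rlt_or_le (ln (INR L)) 1) as [Hlt | Hge]; [exfalso | exact Hge].
  apply exp_increasing in Hlt; rewrite exp_ln in Hlt by lra.
  pose proof exp_le_3; lra.
Qed.

Theorem theorem7 :
  forall C c : R, 0 < C -> 0 < c ->
  exists C' : R, 0 < C' /\
  exists L0 : nat,
  forall L T L' : nat,
    (L0 <= L)%nat ->
    INR T <= c * INR L ->
    (0 < L')%nat ->
    alg3_length_bound C L T L' ->
    rate L L' >= 1 - C' * (sqrt (ln (INR L) / INR L)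
                           + sqrt (noise_rate T L' * ln (INR L))).
Proof.
  intros C c HC Hc.
  pose proof (sqrt_pos c).
  exists (C * (1 + sqrt c)); split; [nra|].
  exists 3%nat; intros L T L' HL HT HL' Hbound.
  unfold rate, noise_rate, alg3_length_bound in *.
  pose proof (one_le_ln_INR L HL) as Hg.
  assert (Hl : 0 < INR L) by (apply lt_0_INR; lia).
  assert (Hp : 0 < INR L') by (apply lt_0_INR; lia).
  pose proof (pos_INR T).
  assert (Herr : 0 <= C * (1 + sqrt c) * (sqrt (ln (INR L) / INR L)
                                          + sqrt (INR T / INR L' * ln (INR L)))).
  { pose proof (sqrt_pos (ln (INR L) / INR L)).
    pose proof (sqrt_pos (INR T / INR L' * ln (INR L))).
    repeat apply Rmult_le_pos; lra. }
  destruct (Rle_lt_dec (INR L') (INR L)) as [Hshort | Hlong].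
  - assert (1 <= INR L / INR L').
    { apply Rmult_le_reg_r with (INR L'); [lra|]. field_simplify; lra. }
    lra.
  - eapply Rge_trans; [apply (div_ge_one_sub _ _ _ Hp Hbound)|].
    apply Rle_ge, Rplus_le_compat_l, Ropp_le_contravar, length_excess_div_le; lra.
Qed.
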